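(* Let $\gamma:Y\to Y$, $\gamma(r,v)=(r,v+1)$ (an isometry of $Y$). There is a function $C(r)>0$ of $r\in[0,\infty)$ such that $$C(r)\,l^{\frac{1}{1+2\alpha}}\le \dist(\gamma^l x,x)\le 3\,l^{\frac{1}{1+2\alpha}}$$ holds for all $x=(r,v)\in Y$ and all $l\in\mathbb{Z}_+$.
   Context: Let $\alpha>0$. Let $Y=[0,\infty)\times\mathbb R$ with coordinates $(r,v)$, equipped with the distance $\dist$ defined as follows: on $(0,\infty)\times\mathbb R$, $\dist$ is the length distance of the incomplete Riemannian metric $g=dr^2+r^{-4\alpha}dv^2$, and $(Y,\dist)$ is the metric completion of $((0,\infty)\times\mathbb R,\dist)$, where the point $(0,v)$ is the limit of $(r,v)$ as $r\to0^+$. *)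

From Stdlib Require Import Reals.
From Coquelicot Require Import Coquelicot.
Open Scope R_scope.

(* A real function that is C^1 (differentiable everywhere with continuous
   derivative).  Curves are parametrized on [0,1]; any C^1 curve on [0,1]
   extends to a C^1 function on R, so nothing is lost. *)
Definition is_C1 (f : R -> R) : Prop :=
  (forall t, ex_derive f t) /\ (forall t, continuous (Derive f) t).

Definition adm_curve (p q : R * R) (rc vc : R -> R) : Prop :=
  is_C1 rc /\ is_C1 vc /\ (forall t, 0 <= t <= 1 -> 0 < rc t) /\
  rc 0 = fst p /\ vc 0 = snd p /\ rc 1 = fst q /\ vc 1 = snd q.

Definition g_length (alpha : R) (rc vc : R -> R) : R :=
  RInt (fun t => sqrt ((Derive rc t) ^ 2
                       + Rpower (rc t) (-4 * alpha) * (Derive vc t) ^ 2)) 0 1.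

Definition dist0 (alpha : R) (p q : R * R) : R :=
  real (Glb_Rbar (fun L => exists rc vc, adm_curve p q rc vc /\
                                         L = g_length alpha rc vc)).

(* Distance on the metric completion Y = [0,oo) x R, where (0,v) is the limit of
   (r,v) as r -> 0+.  For p = (r1,v1), q = (r2,v2) with r1, r2 >= 0, the points
   (r1 + 1/(n+1), v1) and (r2 + 1/(n+1), v2) converge in Y to p and q, so the
   completion distance is the limit of their dist0 distances. *)
Definition distY (alpha : R) (p q : R * R) : R :=
  real (Lim_seq (fun n => dist0 alpha (fst p + / INR (S n), snd p)
                                       (fst q + / INR (S n), snd q))).

Definition gamma_pow (l : nat) (x : R * R) : R * R := (fst x, snd x + INR l).

(* The upper bound is realised by a detour: climb from height r0 to H = max(Λ, r0), where
   Λ = l^(1/(1+2α)), travel the v-distance l at height H, where the metric weight is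
   H^(-2α) <= Λ^(-2α), and descend; joining the three phases with a cubic smoothstep gives a C^1
   curve of length at most 2Λ + Λ^(-2α) l = 3Λ.  Conversely, a curve that climbs above
   K = (r+2)Λ spends length at least 2(K - r0) >= 2Λ on its r-motion, and a curve that stays below
   K has v-weight at least K^(-2α), hence length at least K^(-2α) l = (r+2)^(-2α) Λ.  Both bounds
   hold for every approximating height r0 = r + 1/(n+1) <= r + 1, hence for the limit defining
   distY. *)

From Stdlib Require Import Reals Lra Classical.
From Coquelicot Require Import Coquelicot.
Open Scope R_scope.

Definition clamp01 (x : R) : R := Rmin 1 (Rmax 0 x).

Lemma clamp01_cases x :
  (x <= 0 /\ clamp01 x = 0) \/ (0 <= x <= 1 /\ clamp01 x = x) \/ (1 <= x /\ clamp01 x = 1).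
Proof.
  unfold clamp01, Rmin, Rmax.
  destruct (Rle_dec 0 x), (Rle_dec 1 x), (Rle_dec 1 0); lra.
Qed.

Lemma clamp01_bounds x : 0 <= clamp01 x <= 1.
Proof. destruct (clamp01_cases x) as [[? ->]|[[? ->]|[? ->]]]; lra. Qed.

Lemma clamp01_lipschitz x y : Rabs (clamp01 y - clamp01 x) <= Rabs (y - x).
Proof.
  destruct (clamp01_cases x) as [[? ->]|[[? ->]|[? ->]]];
  destruct (clamp01_cases y) as [[? ->]|[[? ->]|[? ->]]];
  unfold Rabs; repeat destruct Rcase_abs; lra.
Qed.

Lemma continuous_clamp01 x : continuous clamp01 x.
Proof.
  apply continuity_pt_filterlim. intros eps heps.
  exists eps. split; [exact heps|]. intros y [_ hy].
  eapply Rle_lt_trans; [apply clamp01_lipschitz|exact hy].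
Qed.

Definition smoothstep (x : R) : R := 3 * clamp01 x ^ 2 - 2 * clamp01 x ^ 3.
Definition smoothstep' (x : R) : R := 6 * clamp01 x * (1 - clamp01 x).

Lemma smoothstep_le0 x : x <= 0 -> smoothstep x = 0.
Proof.
  intros hx. unfold smoothstep.
  destruct (clamp01_cases x) as [[? ->]|[[? ->]|[? ->]]]; try lra.
  replace x with 0 by lra. ring.
Qed.

Lemma smoothstep_ge1 x : 1 <= x -> smoothstep x = 1.
Proof.
  intros hx. unfold smoothstep.
  destruct (clamp01_cases x) as [[? ->]|[[? ->]|[? ->]]]; try lra.
  replace x with 1 by lra. ring.
Qed.

Lemma smoothstep_bounds x : 0 <= smoothstep x <= 1.
Proof.
  unfold smoothstep. pose proof (clamp01_bounds x).
  generalize dependent (clamp01 x); intros c hc.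
  assert (0 <= c ^ 2 * (3 - 2 * c)) by (apply Rmult_le_pos; [apply pow2_ge_0|lra]).
  assert (0 <= (1 - c) ^ 2 * (1 + 2 * c)) by (apply Rmult_le_pos; [apply pow2_ge_0|lra]).
  split; nra.
Qed.

Lemma smoothstep'_ge0 x : 0 <= smoothstep' x.
Proof. unfold smoothstep'. pose proof (clamp01_bounds x). nra. Qed.

Lemma smoothstep'_out x : ~ (0 < x < 1) -> smoothstep' x = 0.
Proof.
  intros hx. unfold smoothstep'.
  destruct (clamp01_cases x) as [[? ->]|[[? ->]|[? ->]]]; try ring.
  assert (x = 0 \/ x = 1) as [-> | ->]; [|ring|ring].
  destruct (Rle_lt_dec x 0), (Rle_lt_dec 1 x); [left|left|right|exfalso; apply hx]; lra.
Qed.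

Lemma clamp01_defect x y :
  clamp01 x * (1 - clamp01 x) * Rabs ((clamp01 y - clamp01 x) - (y - x)) <= (y - x) ^ 2.
Proof.
  destruct (clamp01_cases x) as [[? ->]|[[? ->]|[? ->]]];
  [| |rewrite Rminus_diag]; rewrite ?Rmult_0_r, ?Rmult_0_l; try apply pow2_ge_0.
  assert (0 <= x * (1 - x) <= 1) by nra.
  destruct (clamp01_cases y) as [[? ->]|[[? ->]|[? ->]]].
  - rewrite Rabs_right by lra.
    assert (0 <= x * - y) by (apply Rmult_le_pos; lra).
    assert (0 <= x * (x * - y)) by (apply Rmult_le_pos; lra). nra.
  - replace (y - x - (y - x)) with 0 by ring. rewrite Rabs_R0, Rmult_0_r. apply pow2_ge_0.
  - rewrite Rabs_left1 by lra.
    assert (0 <= (1 - x) * (y - 1)) by (apply Rmult_le_pos; lra).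
    assert (0 <= (1 - x) * ((1 - x) * (y - 1))) by (apply Rmult_le_pos; lra). nra.
Qed.

Lemma smoothstep_remainder x y :
  Rabs (smoothstep y - smoothstep x - smoothstep' x * (y - x)) <= 9 * (y - x) ^ 2.
Proof.
  unfold smoothstep, smoothstep'.
  pose proof (clamp01_defect x y) as hdefect.
  pose proof (Rsqr_le_abs_1 _ _ (clamp01_lipschitz x y)) as hlip. rewrite !Rsqr_pow2 in hlip.
  pose proof (clamp01_bounds x) as hw; pose proof (clamp01_bounds y) as hu.
  revert hdefect hlip hw hu. generalize (clamp01 x) (clamp01 y). intros w u hdefect hlip hw hu.
  (* exact Taylor expansion of the cubic at [w], plus the clamping error *)
  replace (3 * u ^ 2 - 2 * u ^ 3 - (3 * w ^ 2 - 2 * w ^ 3) - 6 * w * (1 - w) * (y - x))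
    with ((u - w) ^ 2 * (3 - 2 * u - 4 * w) + 6 * (w * (1 - w) * ((u - w) - (y - x)))) by ring.
  eapply Rle_trans; [apply Rabs_triang|].
  rewrite Rabs_mult, (Rabs_mult 6), (Rabs_mult (w * (1 - w))).
  rewrite (Rabs_right 6), (Rabs_right ((u - w) ^ 2)), (Rabs_right (w * (1 - w))) by
    (apply Rle_ge; try apply pow2_ge_0; nra).
  assert (Rabs (3 - 2 * u - 4 * w) <= 3) by (apply Rabs_le; lra).
  assert ((u - w) ^ 2 * Rabs (3 - 2 * u - 4 * w) <= (u - w) ^ 2 * 3)
    by (apply Rmult_le_compat_l; [apply pow2_ge_0|lra]).
  lra.
Qed.

Lemma is_derive_of_quadratic_remainder (f : R -> R) (x d M : R) :
  (forall y, Rabs (f y - f x - d * (y - x)) <= M * (y - x) ^ 2) -> is_derive f x d.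
Proof.
  intros hrem. apply is_derive_Reals. intros eps heps.
  assert (hM : 0 <= M).
  { pose proof (hrem (x + 1)) as h1. replace (x + 1 - x) with 1 in h1 by ring.
    pose proof (Rabs_pos (f (x + 1) - f x - d * 1)). lra. }
  assert (hdelta : 0 < eps / (M + 1)) by (apply Rdiv_lt_0_compat; lra).
  exists (mkposreal _ hdelta). intros h hh0 hh. simpl in hh.
  specialize (hrem (x + h)). replace (x + h - x) with h in hrem by ring.
  replace ((f (x + h) - f x) / h - d) with ((f (x + h) - f x - d * h) / h) by (field; exact hh0).
  unfold Rdiv. rewrite Rabs_mult, Rabs_inv.
  assert (habs : 0 < Rabs h) by (apply Rabs_pos_lt; exact hh0).
  apply Rmult_lt_reg_r with (Rabs h); [exact habs|].
  rewrite Rmult_assoc, Rinv_l, Rmult_1_r by lra.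
  rewrite <- (pow2_abs h) in hrem.
  assert (Rabs h * (M + 1) < eps).
  { apply Rmult_lt_reg_r with (/ (M + 1)); [apply Rinv_0_lt_compat; lra|].
    rewrite Rmult_assoc, Rinv_r by lra. lra. }
  nra.
Qed.

Lemma is_derive_smoothstep x : is_derive smoothstep x (smoothstep' x).
Proof. apply is_derive_of_quadratic_remainder with 9. apply smoothstep_remainder. Qed.

Lemma continuous_smoothstep' x : continuous smoothstep' x.
Proof.
  unfold smoothstep'.
  apply (continuous_mult (fun t => 6 * clamp01 t));
    [apply (continuous_mult (fun _ => 6))|apply (continuous_minus (fun _ => 1))];
    auto using continuous_const, continuous_clamp01.
Qed.

Lemma ex_derive_smoothstep x : ex_derive smoothstep x.
Proof. exists (smoothstep' x). apply is_derive_smoothstep. Qed.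

Lemma Derive_smoothstep x : Derive smoothstep x = smoothstep' x.
Proof. apply is_derive_unique, is_derive_smoothstep. Qed.

Definition phase (k t : R) : R := smoothstep (3 * t - k).
Definition phase' (k t : R) : R := 3 * smoothstep' (3 * t - k).

Lemma phase_at_0 k : 0 <= k -> phase k 0 = 0.
Proof. intros hk. apply smoothstep_le0. lra. Qed.

Lemma phase_at_1 k : k <= 2 -> phase k 1 = 1.
Proof. intros hk. apply smoothstep_ge1. lra. Qed.

Lemma is_derive_phase k t : is_derive (phase k) t (phase' k t).
Proof.
  unfold phase, phase'. auto_derive; [auto using ex_derive_smoothstep|].
  rewrite Derive_smoothstep. unfold Rminus. ring.
Qed.

Lemma ex_derive_phase k t : ex_derive (phase k) t.
Proof. exists (phase' k t). apply is_derive_phase. Qed.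

Lemma Derive_phase k t : Derive (phase k) t = phase' k t.
Proof. apply is_derive_unique, is_derive_phase. Qed.

Lemma continuous_phase' k t : continuous (phase' k) t.
Proof.
  unfold phase'. apply (continuous_mult (fun _ => 3)); [apply continuous_const|].
  apply (continuous_comp (fun t => 3 * t - k) smoothstep'); [|apply continuous_smoothstep'].
  apply (@ex_derive_continuous R_AbsRing R_NormedModule). auto_derive. exact I.
Qed.

Lemma phase'_ge0 k t : 0 <= phase' k t.
Proof. unfold phase'. pose proof (smoothstep'_ge0 (3 * t - k)). lra. Qed.

Definition detour_r (r0 H t : R) : R := r0 + (H - r0) * (phase 0 t - phase 2 t).
Definition detour_v (v L t : R) : R := v + L * (1 - phase 1 t).

Lemma is_C1_of_derive (f f' : R -> R) :
  (forall x, is_derive f x (f' x)) -> (forall x, continuous f' x) -> is_C1 f.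
Proof.
  intros hd hc. split; [intros x; exists (f' x); apply hd|].
  intros x. apply (continuous_ext f'); [|apply hc].
  intros t. symmetry. apply is_derive_unique, hd.
Qed.

Lemma sqrt_sum_sq_le x y : sqrt (x ^ 2 + y ^ 2) <= Rabs x + Rabs y.
Proof.
  pose proof (Rabs_pos x); pose proof (Rabs_pos y).
  rewrite <- (sqrt_pow2 (Rabs x + Rabs y)) by lra.
  apply sqrt_le_1_alt. rewrite <- (pow2_abs x), <- (pow2_abs y).
  assert (0 <= Rabs x * Rabs y) by (apply Rmult_le_pos; lra). nra.
Qed.

Definition speed (alpha r dr dv : R) : R := sqrt (dr ^ 2 + Rpower r (-4 * alpha) * dv ^ 2).

Lemma g_length_speed alpha rc vc :
  g_length alpha rc vc = RInt (fun t => speed alpha (rc t) (Derive rc t) (Derive vc t)) 0 1.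
Proof. reflexivity. Qed.

Lemma speed_hypot alpha r dr dv :
  speed alpha r dr dv = sqrt (dr ^ 2 + (Rpower r (-2 * alpha) * dv) ^ 2).
Proof.
  unfold speed. do 2 f_equal.
  replace (-4 * alpha) with (-2 * alpha + -2 * alpha) by ring. rewrite Rpower_plus. ring.
Qed.

Lemma Rabs_Rpower_mult r e y : Rabs (Rpower r e * y) = Rpower r e * Rabs y.
Proof. rewrite Rabs_mult, Rabs_right; [reflexivity|left; apply exp_pos]. Qed.

Lemma speed_ge_dr alpha r dr dv : Rabs dr <= speed alpha r dr dv.
Proof. rewrite speed_hypot. eapply Rle_trans; [apply Rmax_l|apply sqrt_plus_sqr]. Qed.

Lemma speed_ge_dv alpha r dr dv : Rpower r (-2 * alpha) * Rabs dv <= speed alpha r dr dv.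
Proof.
  rewrite speed_hypot, <- Rabs_Rpower_mult.
  eapply Rle_trans; [apply Rmax_r|apply sqrt_plus_sqr].
Qed.

Lemma speed_le alpha r dr dv : speed alpha r dr dv <= Rabs dr + Rpower r (-2 * alpha) * Rabs dv.
Proof. rewrite speed_hypot, <- Rabs_Rpower_mult. apply sqrt_sum_sq_le. Qed.

Lemma continuous_pow2_comp (f : R -> R) x : continuous f x -> continuous (fun t => f t ^ 2) x.
Proof.
  intros hf. apply (continuous_comp f (fun y => y ^ 2)); [exact hf|].
  apply (@ex_derive_continuous R_AbsRing R_NormedModule). auto_derive. exact I.
Qed.

Lemma ex_RInt_speed alpha p q rc vc :
  adm_curve p q rc vc -> ex_RInt (fun t => speed alpha (rc t) (Derive rc t) (Derive vc t)) 0 1.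
Proof.
  intros [[drc crc] [[dvc cvc] [pos _]]].
  apply (@ex_RInt_continuous R_CompleteNormedModule).
  intros t ht. rewrite Rmin_left, Rmax_right in ht by lra.
  unfold speed, Rpower. apply continuous_sqrt_comp.
  apply (continuous_plus (fun t => Derive rc t ^ 2)); [now apply continuous_pow2_comp|].
  apply (continuous_mult (fun t => exp (-4 * alpha * ln (rc t))));
    [|now apply continuous_pow2_comp].
  apply continuous_exp_comp, (continuous_mult (fun _ => -4 * alpha)); [apply continuous_const|].
  apply (continuous_comp rc ln); [now apply (@ex_derive_continuous R_AbsRing R_NormedModule)|].
  apply continuous_ln, pos. exact ht.
Qed.

Lemma RInt_derive (G g : R -> R) a b :
  (forall x, is_derive G x (g x)) -> (forall x, continuous g x) -> RInt g a b = G b - G a.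
Proof. intros hG hg. apply is_RInt_unique, (is_RInt_derive G g); auto. Qed.

Lemma RInt_le_increment (f G g : R -> R) a b :
  a <= b -> ex_RInt f a b -> (forall x, is_derive G x (g x)) -> (forall x, continuous g x) ->
  (forall x, a < x < b -> f x <= g x) -> RInt f a b <= G b - G a.
Proof.
  intros hab hf hG hg hfg. rewrite <- (RInt_derive G g) by auto.
  apply RInt_le; auto. apply (@ex_RInt_continuous R_CompleteNormedModule); auto.
Qed.

Lemma increment_le_RInt (f G g : R -> R) a b :
  a <= b -> ex_RInt f a b -> (forall x, is_derive G x (g x)) -> (forall x, continuous g x) ->
  (forall x, a < x < b -> g x <= f x) -> G b - G a <= RInt f a b.
Proof.
  intros hab hf hG hg hfg. rewrite <- (RInt_derive G g) by auto.
  apply RInt_le; auto. apply (@ex_RInt_continuous R_CompleteNormedModule); auto.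
Qed.

Lemma detour_r_ge r0 H t : r0 <= H -> r0 <= detour_r r0 H t.
Proof.
  intros hH. unfold detour_r, phase.
  assert (smoothstep (3 * t - 2) <= smoothstep (3 * t - 0)).
  { destruct (Rle_dec (3 * t - 2) 0).
    - rewrite smoothstep_le0 by assumption. apply smoothstep_bounds.
    - rewrite (smoothstep_ge1 (3 * t - 0)) by lra. apply smoothstep_bounds. }
  nra.
Qed.

Lemma is_derive_detour_r r0 H t :
  is_derive (detour_r r0 H) t ((H - r0) * (phase' 0 t - phase' 2 t)).
Proof.
  unfold detour_r. auto_derive; [auto using ex_derive_phase|].
  rewrite !Derive_phase. ring.
Qed.

Lemma is_derive_detour_v v L t : is_derive (detour_v v L) t (- L * phase' 1 t).
Proof.
  unfold detour_v. auto_derive; [auto using ex_derive_phase|].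
  rewrite Derive_phase. ring.
Qed.

Lemma continuous_detour_r' r0 H t : continuous (fun t => (H - r0) * (phase' 0 t - phase' 2 t)) t.
Proof.
  apply (continuous_mult (fun _ => H - r0)); [apply continuous_const|].
  apply (continuous_minus (phase' 0)); apply continuous_phase'.
Qed.

Lemma continuous_detour_v' L t : continuous (fun t => - L * phase' 1 t) t.
Proof.
  apply (continuous_mult (fun _ => - L)); [apply continuous_const|apply continuous_phase'].
Qed.

Lemma adm_curve_detour r0 H v L :
  0 < r0 <= H -> adm_curve (r0, v + L) (r0, v) (detour_r r0 H) (detour_v v L).
Proof.
  intros hr0. unfold adm_curve; simpl.
  split; [apply (is_C1_of_derive _ _ (is_derive_detour_r r0 H) (continuous_detour_r' r0 H))|].
  split; [apply (is_C1_of_derive _ _ (is_derive_detour_v v L) (continuous_detour_v' L))|].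
  split; [intros t _; pose proof (detour_r_ge r0 H t); lra|].
  unfold detour_r, detour_v. rewrite !phase_at_0, !phase_at_1 by lra.
  repeat split; ring.
Qed.

Lemma detour_r_middle r0 H t : 0 < 3 * t - 1 < 1 -> detour_r r0 H t = H.
Proof.
  intros ht. unfold detour_r, phase.
  rewrite (smoothstep_ge1 (3 * t - 0)), (smoothstep_le0 (3 * t - 2)) by lra. ring.
Qed.

Lemma g_length_detour alpha r0 H v L : 0 < r0 <= H -> 0 <= L ->
  g_length alpha (detour_r r0 H) (detour_v v L) <= 2 * (H - r0) + Rpower H (-2 * alpha) * L.
Proof.
  intros hr0 hL. set (c := Rpower H (-2 * alpha) * L).
  set (G := fun t => (H - r0) * (phase 0 t + phase 2 t) + c * phase 1 t).
  assert (hG : G 1 - G 0 = 2 * (H - r0) + c).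
  { unfold G. rewrite !phase_at_0, !phase_at_1 by lra. ring. }
  (* [G] antidifferentiates a bound for the speed, since the v-motion happens at height [H]. *)
  rewrite g_length_speed, <- hG.
  apply RInt_le_increment with (fun t => (H - r0) * (phase' 0 t + phase' 2 t) + c * phase' 1 t).
  - lra.
  - apply ex_RInt_speed with (r0, v + L) (r0, v). now apply adm_curve_detour.
  - intros t. unfold G. auto_derive; [auto using ex_derive_phase|]. rewrite !Derive_phase. ring.
  - intros t. apply (continuous_plus (fun t => (H - r0) * (phase' 0 t + phase' 2 t))).
    + apply (continuous_mult (fun _ => H - r0)); [apply continuous_const|].
      apply (continuous_plus (phase' 0)); apply continuous_phase'.
    + apply (continuous_mult (fun _ => c)); [apply continuous_const|apply continuous_phase'].
  - intros t _.
    rewrite (is_derive_unique _ _ _ (is_derive_detour_r r0 H t)),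
      (is_derive_unique _ _ _ (is_derive_detour_v v L t)).
    eapply Rle_trans; [apply speed_le|]. apply Rplus_le_compat.
    + pose proof (phase'_ge0 0 t); pose proof (phase'_ge0 2 t).
      rewrite Rabs_mult, Rabs_right by lra.
      apply Rmult_le_compat_l; [lra|]. apply Rabs_le. lra.
    + rewrite Rabs_mult, Rabs_Ropp, !Rabs_right by (try apply Rle_ge, phase'_ge0; lra).
      destruct (classic (0 < 3 * t - 1 < 1)) as [hin|hout].
      * rewrite detour_r_middle by exact hin. unfold c. lra.
      * unfold phase'. rewrite smoothstep'_out by exact hout. lra.
Qed.

Lemma Rpower_antitone_base x y e : e <= 0 -> 0 < x <= y -> Rpower y e <= Rpower x e.
Proof.
  intros he hxy. replace e with (- - e) by ring. rewrite !(Rpower_Ropp _ (- e)).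
  apply Rinv_le_contravar; [apply exp_pos|apply Rle_Rpower_l; lra].
Qed.

Lemma g_length_ge_climb alpha p q rc vc t0 :
  adm_curve p q rc vc -> 0 <= t0 <= 1 -> 2 * rc t0 - fst p - fst q <= g_length alpha rc vc.
Proof.
  intros hadm ht0. pose proof (ex_RInt_speed alpha _ _ _ _ hadm) as hint.
  destruct hadm as [[drc crc] [_ [pos [e0 [_ [e1 _]]]]]].
  set (f := fun t => speed alpha (rc t) (Derive rc t) (Derive vc t)) in hint.
  assert (hint0 : ex_RInt f 0 t0)
    by (apply (@ex_RInt_Chasles_1 R_CompleteNormedModule) with 1; auto).
  assert (hint1 : ex_RInt f t0 1)
    by (apply (@ex_RInt_Chasles_2 R_CompleteNormedModule) with 0; auto).
  rewrite g_length_speed. fold f.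
  rewrite <- (RInt_Chasles f 0 t0 1 hint0 hint1), <- e0, <- e1.
  assert (rc t0 - rc 0 <= RInt f 0 t0).
  { apply (increment_le_RInt f rc (Derive rc)); auto; try lra.
    - intros t. apply Derive_correct, drc.
    - intros t _. eapply Rle_trans; [apply Rle_abs|apply speed_ge_dr]. }
  assert (- rc 1 - - rc t0 <= RInt f t0 1).
  { apply (increment_le_RInt f (fun t => - rc t) (fun t => - Derive rc t)); auto; try lra.
    - intros t. apply (is_derive_opp rc), Derive_correct, drc.
    - intros t. apply (continuous_opp (Derive rc)), crc.
    - intros t _. eapply Rle_trans; [|apply speed_ge_dr]. rewrite <- Rabs_Ropp. apply Rle_abs. }
  change (plus ?a ?b) with (a + b).
  lra.
Qed.

Lemma g_length_ge_shift alpha p q rc vc K :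
  0 <= alpha -> adm_curve p q rc vc -> (forall t, 0 <= t <= 1 -> rc t <= K) ->
  Rpower K (-2 * alpha) * (snd p - snd q) <= g_length alpha rc vc.
Proof.
  intros halpha hadm hK. pose proof (ex_RInt_speed alpha _ _ _ _ hadm) as hint.
  destruct hadm as [_ [[dvc cvc] [pos [_ [e0 [_ e1]]]]]].
  rewrite g_length_speed, <- e0, <- e1.
  set (c := Rpower K (-2 * alpha)).
  replace (c * (vc 0 - vc 1)) with ((- c) * vc 1 - (- c) * vc 0) by ring.
  apply (increment_le_RInt _ (fun t => - c * vc t) (fun t => - c * Derive vc t)); auto; try lra.
  - intros t. apply is_derive_scal, Derive_correct, dvc.
  - intros t. apply (continuous_mult (fun _ => - c)); [apply continuous_const|apply cvc].
  - intros t ht. eapply Rle_trans; [|apply speed_ge_dv].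
    assert (c <= Rpower (rc t) (-2 * alpha)).
    { apply Rpower_antitone_base; [lra|]. split; [apply pos|apply hK]; lra. }
    assert (- Derive vc t <= Rabs (Derive vc t)) by (rewrite <- Rabs_Ropp; apply Rle_abs).
    assert (0 <= c) by (left; apply exp_pos).
    pose proof (Rabs_pos (Derive vc t)). nra.
Qed.

Lemma g_length_ge alpha p q rc vc K :
  0 <= alpha -> adm_curve p q rc vc ->
  Rmin (2 * K - fst p - fst q) (Rpower K (-2 * alpha) * (snd p - snd q)) <= g_length alpha rc vc.
Proof.
  intros halpha hadm.
  destruct (classic (exists t0, 0 <= t0 <= 1 /\ K < rc t0)) as [[t0 [ht0 hK]]|hK].
  - eapply Rle_trans; [apply Rmin_l|].
    eapply Rle_trans; [|apply (g_length_ge_climb _ _ _ _ _ t0 hadm ht0)]. lra.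
  - eapply Rle_trans; [apply Rmin_r|]. apply g_length_ge_shift; auto.
    intros t ht. apply Rnot_lt_le. intros hlt. apply hK. exists t. auto.
Qed.

Lemma real_Glb_Rbar_bounds (E : R -> Prop) (m M : R) :
  (exists x, E x /\ x <= M) -> (forall x, E x -> m <= x) -> m <= real (Glb_Rbar E) <= M.
Proof.
  intros [x0 [hx0 hx0M]] hlow. destruct (Glb_Rbar_correct E) as [hlb hglb].
  specialize (hlb x0 hx0).
  assert (hm : Rbar_le m (Glb_Rbar E)) by (apply hglb; intros x hx; apply hlow, hx).
  destruct (Glb_Rbar E); simpl in *; try contradiction; lra.
Qed.

Lemma real_Lim_seq_bounds (u : nat -> R) (m M : R) :
  (forall n, m <= u n <= M) -> m <= real (Lim_seq u) <= M.
Proof.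
  intros hu.
  assert (hm : Rbar_le (Lim_seq (fun _ => m)) (Lim_seq u))
    by (apply Lim_seq_le_loc; exists 0%nat; intros; apply hu).
  assert (hM : Rbar_le (Lim_seq u) (Lim_seq (fun _ => M)))
    by (apply Lim_seq_le_loc; exists 0%nat; intros; apply hu).
  rewrite Lim_seq_const in hm, hM.
  destruct (Lim_seq u); simpl in *; try contradiction; lra.
Qed.

Lemma Rpower_ge_1 x e : 1 <= x -> 0 <= e -> 1 <= Rpower x e.
Proof. intros hx he. rewrite <- (Rpower_O x) by lra. apply Rle_Rpower; lra. Qed.

Lemma Rpower_balance alpha l : 0 < 1 + 2 * alpha -> 0 < l ->
  Rpower (Rpower l (1 / (1 + 2 * alpha))) (-2 * alpha) * l = Rpower l (1 / (1 + 2 * alpha)).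
Proof.
  intros halpha hl. set (Lam := Rpower l (1 / (1 + 2 * alpha))).
  assert (hl' : l = Rpower Lam (1 + 2 * alpha)).
  { unfold Lam. rewrite Rpower_mult.
    replace (1 / (1 + 2 * alpha) * (1 + 2 * alpha)) with 1 by (field; lra).
    rewrite Rpower_1 by lra. reflexivity. }
  rewrite hl' at 1. rewrite <- Rpower_plus.
  replace (-2 * alpha + (1 + 2 * alpha)) with 1 by ring.
  apply Rpower_1, exp_pos.
Qed.

Lemma g_length_detour_le alpha r0 v L Lam :
  0 <= alpha -> 0 < r0 -> 0 < Lam -> 0 <= L -> Rpower Lam (-2 * alpha) * L = Lam ->
  g_length alpha (detour_r r0 (Rmax Lam r0)) (detour_v v L) <= 3 * Lam.
Proof.
  intros halpha hr0 hLam hL hbal.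
  assert (hH : Lam <= Rmax Lam r0 /\ r0 <= Rmax Lam r0 /\ Rmax Lam r0 - r0 <= Lam).
  { unfold Rmax. destruct (Rle_dec Lam r0); lra. }
  eapply Rle_trans; [apply g_length_detour; lra|].
  assert (Rpower (Rmax Lam r0) (-2 * alpha) * L <= Rpower Lam (-2 * alpha) * L).
  { apply Rmult_le_compat_r; [lra|]. apply Rpower_antitone_base; lra. }
  lra.
Qed.

Lemma g_length_ge_balanced alpha r r0 v L Lam rc vc :
  0 <= alpha -> 0 <= r -> r0 <= r + 1 -> 1 <= Lam -> Rpower Lam (-2 * alpha) * L = Lam ->
  adm_curve (r0, v + L) (r0, v) rc vc ->
  Rpower (r + 2) (-2 * alpha) * Lam <= g_length alpha rc vc.
Proof.
  intros halpha hr hr0 hLam hbal hadm.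
  eapply Rle_trans; [|apply (g_length_ge alpha _ _ rc vc ((r + 2) * Lam) halpha hadm)]. simpl.
  replace (v + L - v) with L by ring.
  rewrite <- Rpower_mult_distr, Rmult_assoc, hbal by lra.
  apply Rmin_glb; [|lra].
  assert (hC : Rpower (r + 2) (-2 * alpha) <= Rpower 1 (-2 * alpha))
    by (apply Rpower_antitone_base; lra).
  unfold Rpower at 2 in hC. rewrite ln_1, Rmult_0_r, exp_0 in hC.
  assert (0 <= (r + 1) * (Lam - 1)) by (apply Rmult_le_pos; lra).
  nra.
Qed.

Theorem lemma3p11 (alpha : R) (halpha : 0 < alpha) :
  exists C : R -> R,
    (forall r, 0 <= r -> 0 < C r) /\
    (forall (r v : R) (l : nat), 0 <= r -> (1 <= l)%nat ->
       C r * Rpower (INR l) (1 / (1 + 2 * alpha))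
         <= distY alpha (gamma_pow l (r, v)) (r, v)
       /\ distY alpha (gamma_pow l (r, v)) (r, v)
         <= 3 * Rpower (INR l) (1 / (1 + 2 * alpha))).
Proof.
  exists (fun r => Rpower (r + 2) (-2 * alpha)). split; [intros; apply exp_pos|].
  intros r v l hr hl. apply le_INR in hl.
  set (Lam := Rpower (INR l) (1 / (1 + 2 * alpha))).
  assert (hLam : 1 <= Lam) by (apply Rpower_ge_1; [exact hl|apply Rlt_le, Rdiv_lt_0_compat; lra]).
  assert (hbal : Rpower Lam (-2 * alpha) * INR l = Lam) by (apply Rpower_balance; simpl in hl; lra).
  unfold distY, gamma_pow; cbn [fst snd]. apply real_Lim_seq_bounds. intros n.
  assert (hn : 0 < / INR (S n) <= 1).
  { rewrite S_INR. pose proof (pos_INR n). split; [apply Rinv_0_lt_compat; lra|].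
    rewrite <- Rinv_1. apply Rinv_le_contravar; lra. }
  set (r0 := r + / INR (S n)).
  unfold dist0. apply real_Glb_Rbar_bounds.
  - exists (g_length alpha (detour_r r0 (Rmax Lam r0)) (detour_v v (INR l))).
    split; [do 2 eexists; split; [apply adm_curve_detour|reflexivity]|].
    + split; [unfold r0; lra|apply Rmax_r].
    + apply g_length_detour_le; unfold r0; simpl in hl; lra.
  - intros x [rc [vc [hadm ->]]].
    apply (g_length_ge_balanced alpha r r0 v (INR l)); auto; unfold r0; lra.
Qed.
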